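(* Let $L=\{a^nb^m : n,m\in\mathbb{N},\ m\le n\}\cup\{a^nb^mc : n,m\in\mathbb{N}\}$ over the alphabet $\{a,b,c\}$. Then $L\in \mathrm{CH}_1$ and $L\notin \mathrm{CD}$, i.e. $L$ is recognised by some history-deterministic $1$-VASS under coverability acceptance but by no deterministic $k$-VASS (for any $k$) under coverability acceptance.
   Context: Fix a finite alphabet $\Sigma$. A $k$-dimensional vector addition system with states ($k$-VASS) is a tuple $(Q,q_0,F,\delta)$ where $Q$ is a finite set of states, $q_0\in Q$ is initial, $F\subseteq Q$ is the set of accepting states, and $\delta\subseteq Q\times\Sigma\times\mathbb{Z}^k\times Q$ is a finite set of transitions (no $\varepsilon$-transitions). A run on a word $w=a_1\cdots a_n$ is a sequence of transitions $(p_{i-1},a_i,d_i,p_i)$ with $p_0=q_0$ such that the counter vectors $v_0=\vec 0$, $v_i=v_{i-1}+d_i$ all lie in $\mathbb{N}^k$. Under coverability acceptance the run is accepting if $p_n\in F$. The language is the set of words having an accepting run. A VASS is deterministic if for every state $q$ and letter $a$ there is at most one transition $(q,a,d,q')$. A VASS is history-deterministic if there is a resolver, i.e. a function $r$ mapping each finite sequence of transitions and each letter $a$ to a transition labelled $a$, such that for every word $w$ in the language, the sequence of transitions obtained by successively applying $r$ to the letters of $w$ is a run on $w$ (counters stay nonnegative) and is accepting. $\mathrm{CD}_k$ (resp. $\mathrm{CH}_k$) is the class of languages recognised by deterministic (resp. history-deterministic) $k$-VASS under coverability acceptance, and $\mathrm{CD}=\bigcup_{k\ge1}\mathrm{CD}_k$.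 *)

From HB Require Import structures.
From mathcomp Require Import all_boot all_order all_algebra.
Set Implicit Arguments. Unset Strict Implicit. Unset Printing Implicit Defensive.
Import Order.TTheory GRing.Theory Num.Theory.
Local Open Scope ring_scope.

Inductive abc := La | Lb | Lc.
Definition abc_to (x : abc) : 'I_3 :=
  match x with La => inord 0 | Lb => inord 1 | Lc => inord 2 end.
Definition abc_of (i : 'I_3) : abc :=
  match val i with 0%N => La | 1%N => Lb | _ => Lc end.
Lemma abc_toK : cancel abc_to abc_of.
Proof. by case; rewrite /abc_of /= inordK. Qed.
HB.instance Definition _ := Finite.copy abc (can_type abc_toK).

(** k-VASS over a finite alphabet Sigma (no epsilon transitions).
    Counter vectors are elements of Z^k, represented as {ffun 'I_k -> int}. *)
Definition cvec (k : nat) := {ffun 'I_k -> int}.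

Record VASS (Sigma : finType) (k : nat) := {
  vstate : finType;
  vinit : vstate;
  vfinal : {pred vstate};
  vdelta : seq (vstate * Sigma * cvec k * vstate)
}.

Section VASSDefs.
Variables (Sigma : finType) (k : nat) (A : VASS Sigma k).

Definition trans := (vstate A * Sigma * cvec k * vstate A)%type.

Definition tsrc (t : trans) : vstate A := t.1.1.1.
Definition tlab (t : trans) : Sigma := t.1.1.2.
Definition tvec (t : trans) : cvec k := t.1.2.
Definition tdst (t : trans) : vstate A := t.2.

Definition vadd (v d : cvec k) : cvec k := [ffun i => v i + d i].
Definition vzero : cvec k := [ffun _ => 0].
Definition vnonneg (v : cvec k) : bool := [forall i, 0 <= v i].

Fixpoint run_end (p : vstate A) (v : cvec k) (ts : seq trans) (w : seq Sigma)
  : option (vstate A) :=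
  match ts, w with
  | [::], [::] => Some p
  | t :: ts', x :: w' =>
      if [&& t \in vdelta A, tsrc t == p, tlab t == x & vnonneg (vadd v (tvec t))]
      then run_end (tdst t) (vadd v (tvec t)) ts' w'
      else None
  | _, _ => None
  end.

Definition is_run (ts : seq trans) (w : seq Sigma) : Prop :=
  exists q, run_end (vinit A) vzero ts w = Some q.

(** ts is an accepting run (coverability acceptance). *)
Definition accepting_run (ts : seq trans) (w : seq Sigma) : Prop :=
  exists q, run_end (vinit A) vzero ts w = Some q /\ q \in @vfinal _ _ A.

Definition lang (w : seq Sigma) : Prop := exists ts, accepting_run ts w.

Definition deterministic : Prop :=
  forall t1 t2, t1 \in vdelta A -> t2 \in vdelta A ->
    tsrc t1 = tsrc t2 -> tlab t1 = tlab t2 -> t1 = t2.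

Fixpoint resolve_from (r : seq trans -> Sigma -> trans) (h : seq trans)
  (w : seq Sigma) : seq trans :=
  match w with
  | [::] => h
  | a :: w' => resolve_from r (rcons h (r h a)) w'
  end.

Definition resolver (r : seq trans -> Sigma -> trans) : Prop :=
  (forall h a, r h a \in vdelta A /\ tlab (r h a) = a) /\
  (forall w, lang w -> is_run (resolve_from r [::] w) w
                       /\ accepting_run (resolve_from r [::] w) w).

Definition history_deterministic : Prop := exists r, resolver r.

End VASSDefs.

Definition in_CD (Sigma : finType) (k : nat) (L : seq Sigma -> Prop) : Prop :=
  exists A : VASS Sigma k, deterministic A /\ forall w, lang A w <-> L w.

Definition in_CH (Sigma : finType) (k : nat) (L : seq Sigma -> Prop) : Prop :=
  exists A : VASS Sigma k, history_deterministic A /\ forall w, lang A w <-> L w.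

Definition in_CD_any (Sigma : finType) (L : seq Sigma -> Prop) : Prop :=
  exists k, (1 <= k)%N /\ in_CD k L.

Definition Lex (w : seq abc) : Prop :=
  (exists n m : nat, (m <= n)%N /\ w = nseq n La ++ nseq m Lb) \/
  (exists n m : nat, w = nseq n La ++ nseq m Lb ++ [:: Lc]).

(* L in CH_1: a 1-VASS counts the a's and, on each b, either decrements the
   counter in an accepting state or moves to the rejecting state qOver, from
   which a final c is still accepted.  A resolver that decrements exactly while
   the counter is positive follows an accepting run on every word of L.

   L not in CD: in a deterministic VASS the states visited by a run depend only
   on the word, not on the counters.  By pigeonhole, a^i and a^j with i < j reach
   the same state.  As a^i b^j c is in L, the word a^i b^j has a run, and it ends
   in the same state as the accepting run on a^j b^j; so a^i b^j would be in L. *)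

From HB Require Import structures.
From mathcomp Require Import all_boot all_order all_algebra.
From mathcomp Require Import zify.
Set Implicit Arguments. Unset Strict Implicit. Unset Printing Implicit Defensive.
Import GRing.Theory.
Local Open Scope ring_scope.

Section Runs.
Variables (Sigma : finType) (k : nat) (A : VASS Sigma k).

Fixpoint run_conf (p : vstate A) (v : cvec k) (ts : seq (trans A)) (w : seq Sigma)
  : option (vstate A * cvec k) :=
  match ts, w with
  | [::], [::] => Some (p, v)
  | t :: ts', x :: w' =>
      if [&& t \in vdelta A, tsrc t == p, tlab t == x & vnonneg (vadd v (tvec t))]
      then run_conf (tdst t) (vadd v (tvec t)) ts' w'
      else None
  | _, _ => None
  end.

Lemma run_end_conf p v ts w : run_end p v ts w = omap fst (run_conf p v ts w).
Proof. by elim: ts w p v => [|t ts IH] [|x w] p v //=; case: ifP. Qed.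

Lemma run_conf_size p v ts w c : run_conf p v ts w = Some c -> size ts = size w.
Proof.
by elim: ts w p v => [|t ts IH] [|x w] p v //=; case: ifP => // _ /IH ->.
Qed.

Lemma run_conf_cat p v ts1 ts2 w1 w2 : size ts1 = size w1 ->
  run_conf p v (ts1 ++ ts2) (w1 ++ w2) =
  obind (fun c => run_conf c.1 c.2 ts2 w2) (run_conf p v ts1 w1).
Proof.
elim: ts1 w1 p v => [|t ts IH] [|x w] p v //= [] /IH IHw.
by case: ifP.
Qed.

Lemma run_conf_catP p v ts w1 w2 c : run_conf p v ts (w1 ++ w2) = Some c ->
  exists ts1 ts2 c1,
    [/\ ts = ts1 ++ ts2, run_conf p v ts1 w1 = Some c1
       & run_conf c1.1 c1.2 ts2 w2 = Some c].
Proof.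
move=> hrun; have hsize := run_conf_size hrun.
have size_take : size (take (size w1) ts) = size w1.
  by rewrite size_takel // hsize size_cat leq_addr.
move: hrun; rewrite -(cat_take_drop (size w1) ts) run_conf_cat //.
case hrun1 : run_conf => [c1|] //= hrun2.
by exists (take (size w1) ts), (drop (size w1) ts), c1.
Qed.

Definition reaches (w : seq Sigma) (q : vstate A) : Prop :=
  exists ts c, run_conf (vinit A) (vzero k) ts w = Some c /\ c.1 = q.

Lemma langP w : lang A w <-> exists2 q, reaches w q & q \in @vfinal _ _ A.
Proof.
split.
  case=> ts [q []]; rewrite run_end_conf.
  by case hrun: run_conf => [c|] //= [<-]; exists c.1 => //; exists ts, c.
case=> q [ts [c [hrun <-]]] hq.
by exists ts, c.1; rewrite run_end_conf hrun.
Qed.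

Lemma reaches_prefix u v q : reaches (u ++ v) q -> exists p, reaches u p.
Proof.
case=> ts [c [/run_conf_catP [ts1 [_ [c1 [_ hrun1 _]]]] _]].
by exists c1.1, ts1, c1.
Qed.

Hypothesis A_det : deterministic A.

Lemma deterministic_run_conf p v v' ts ts' w c c' :
  run_conf p v ts w = Some c -> run_conf p v' ts' w = Some c' -> c.1 = c'.1.
Proof.
elim: w p v v' ts ts' => [|x w IH] p v v' [|t ts] [|t' ts'] //=.
  by move=> [<-] [<-].
case: ifP => // /and4P [ht /eqP src_t /eqP lab_t _].
case: ifP => // /and4P [ht' /eqP src_t' /eqP lab_t' _].
have <- : t = t' by apply: A_det; rewrite ?src_t ?src_t' ?lab_t ?lab_t'.
exact: IH.
Qed.

Lemma deterministic_reaches_cat u u' v p q q' :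
  reaches u p -> reaches u' p -> reaches (u ++ v) q -> reaches (u' ++ v) q' -> q = q'.
Proof.
move=> [tsu [cu [hu <-]]] [tsu' [cu' [hu' ecu]]].
move=> [ts [c [/run_conf_catP [ts1 [ts2 [c1 [_ hrun1 hrun2]]]] <-]]].
move=> [ts' [c' [/run_conf_catP [ts1' [ts2' [c1' [_ hrun1' hrun2']]]] <-]]].
have ec1 : c1.1 = c1'.1.
  rewrite -(deterministic_run_conf hu hrun1) -ecu.
  exact: deterministic_run_conf hu' hrun1'.
by rewrite ec1 in hrun2; exact: deterministic_run_conf hrun2 hrun2'.
Qed.

End Runs.

Lemma pigeonhole_nat (T : finType) (P : nat -> T -> Prop) :
  (forall i, exists x, P i x) -> exists i j x, [/\ (i < j)%N, P i x & P j x].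
Proof.
move=> hP; have [f hf] := fin_all_exists (fun i : 'I_#|T|.+1 => hP i).
have /injectivePn [i [j neq_ij fij]] : ~~ injectiveb f.
  by apply: contraTN isT => /injectiveP /leq_card; rewrite card_ord ltnn.
have := hf i; have := hf j; rewrite fij.
case: (ltngtP i j) neq_ij => [lt_ij | lt_ji | /val_inj ->];
  rewrite ?eqxx // => _ hj hi.
  by exists i, j, (f j).
by exists j, i, (f j).
Qed.

Lemma Lex_nseq_a n : Lex (nseq n La).
Proof. by left; exists n, 0%N; rewrite cats0. Qed.

Lemma Lex_nseq_ab n : Lex (nseq n La ++ nseq n Lb).
Proof. by left; exists n, n. Qed.

Lemma Lex_nseq_abc n m : Lex (nseq n La ++ nseq m Lb ++ [:: Lc]).
Proof. by right; exists n, m. Qed.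

Lemma Lex_nseq_abN n m : (n < m)%N -> ~ Lex (nseq n La ++ nseq m Lb).
Proof.
pose isA x := if x is La then true else false.
pose isB x := if x is Lb then true else false.
pose isC x := if x is Lc then true else false.
move=> lt_nm [[n' [m' [le_mn' e]]] | [n' [m' e]]].
- have := congr1 (count isA) e; have := congr1 (count isB) e.
  rewrite !count_cat !count_nseq /=; lia.
- by have := congr1 (count isC) e; rewrite !count_cat !count_nseq.
Qed.

Lemma Lex_notin_CD k : ~ in_CD k Lex.
Proof.
case=> A [A_det langA].
have reach_a n : exists p : vstate A, reaches (nseq n La) p.
  by have /langP [p] := (langA _).2 (Lex_nseq_a n); exists p.
have [i [j [p [lt_ij reach_i reach_j]]]] := pigeonhole_nat reach_a.
have [q' reach_q'] : exists q' : vstate A, reaches (nseq i La ++ nseq j Lb) q'.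
  have /langP [q] := (langA _).2 (Lex_nseq_abc i j).
  by rewrite catA => /reaches_prefix.
have /langP [q reach_q final_q] := (langA _).2 (Lex_nseq_ab j).
apply: (Lex_nseq_abN lt_ij); apply/langA/langP; exists q => //.
by rewrite (deterministic_reaches_cat A_det reach_j reach_i reach_q reach_q').
Qed.

(* qA: reading a's; qB: each b cancels an a; qOver: more b's than a's;
   qC: after the final c.  The counter holds #a - #b while in qA or qB. *)
Inductive Lex_state := qA | qB | qOver | qC.

Definition Lex_state_to (s : Lex_state) : 'I_4 :=
  match s with qA => inord 0 | qB => inord 1 | qOver => inord 2 | qC => inord 3 end.
Definition Lex_state_of (i : 'I_4) : Lex_state :=
  match val i with 0%N => qA | 1%N => qB | 2%N => qOver | _ => qC end.
Lemma Lex_state_toK : cancel Lex_state_to Lex_state_of.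
Proof. by case; rewrite /Lex_state_of /= inordK. Qed.
HB.instance Definition _ := Finite.copy Lex_state (can_type Lex_state_toK).

Definition cst (z : int) : cvec 1 := [ffun => z].

Lemma cst_ord0 z : cst z ord0 = z.
Proof. by rewrite ffunE. Qed.

Lemma vadd_cst z (v : cvec 1) : vadd (cst z) v = cst (z + v ord0).
Proof. by apply/ffunP => i; rewrite !ffunE (ord1 i). Qed.

Lemma vnonneg_cst z : vnonneg (cst z) = (0 <= z).
Proof. by apply/forallP/idP => [/(_ ord0)|z_ge0 i]; rewrite ffunE. Qed.

Definition edge (p : Lex_state) (x : abc) (d : int) (q : Lex_state) := (p, x, cst d, q).

Definition Lex_vass : VASS abc 1 := {|
  vstate := Lex_state;
  vinit := qA;
  vfinal := fun s => if s is qOver then false else true;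
  vdelta := [:: edge qA La 1 qA;
                edge qA Lb (-1) qB; edge qB Lb (-1) qB;
                edge qA Lb 0 qOver; edge qB Lb 0 qOver; edge qOver Lb 0 qOver;
                edge qA Lc 0 qC; edge qB Lc 0 qC; edge qOver Lc 0 qC] |}.

Definition guess (s : Lex_state) (n : int) (x : abc) : trans Lex_vass :=
  match x, s with
  | La, _ => edge qA La 1 qA
  | Lb, qA => if 0 < n then edge qA Lb (-1) qB else edge qA Lb 0 qOver
  | Lb, qB => if 0 < n then edge qB Lb (-1) qB else edge qB Lb 0 qOver
  | Lb, _ => edge qOver Lb 0 qOver
  | Lc, qB => edge qB Lc 0 qC
  | Lc, qOver => edge qOver Lc 0 qC
  | Lc, _ => edge qA Lc 0 qC
  end.

Lemma guess_edge s n x : guess s n x \in vdelta Lex_vass.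
Proof. by case: x; case: s => /=; try case: ifP; rewrite !inE eqxx ?orbT. Qed.

Lemma guess_lab s n x : tlab (guess s n x) = x.
Proof. by case: x; case: s => /=; try case: ifP. Qed.

Fixpoint guess_run (s : Lex_state) (n : int) (w : seq abc) : seq (trans Lex_vass) :=
  if w is x :: w' then
    let t := guess s n x in t :: guess_run (tdst t) (n + tvec t ord0) w'
  else [::].

Definition guided (s : Lex_state) (n : int) (w : seq abc) : option Lex_state :=
  @run_end _ _ Lex_vass s (cst n) (guess_run s n w) w.

Lemma guided_cons s n x w : guided s n (x :: w) =
  let t := guess s n x in
  if (tsrc t == s) && (0 <= n + tvec t ord0) then guided (tdst t) (n + tvec t ord0) w
  else None.
Proof. by rewrite /guided /= guess_edge guess_lab eqxx vadd_cst vnonneg_cst. Qed.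

Lemma guided_nseq_a n m w : 0 <= n ->
  guided qA n (nseq m La ++ w) = guided qA (n + m%:Z) w.
Proof.
elim: m n => [|m IHm] n n_ge0 /=; first by rewrite addr0.
rewrite guided_cons /tsrc /= cst_ord0 eqxx ifT; last lia.
by rewrite IHm; [congr guided; lia | lia].
Qed.

Lemma guided_nseq_b s n m w : s = qA \/ s = qB -> m%:Z <= n ->
  guided s n (nseq m Lb ++ w) = guided (if m == 0%N then s else qB) (n - m%:Z) w.
Proof.
elim: m s n => [|m IHm] s n s_AB le_mn /=; first by rewrite subr0.
have n_gt0 : 0 < n by lia.
rewrite guided_cons.
case: s_AB => ->; rewrite /= n_gt0 cst_ord0 eqxx ifT; try lia.
all: rewrite IHm /= ?if_same; [congr guided; lia | by right | lia].
Qed.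

Lemma guided_over s w : s = qA \/ s = qB -> guided s 0 (Lb :: w) = guided qOver 0 w.
Proof. by case=> ->; rewrite guided_cons /tsrc /= cst_ord0 addr0 eqxx. Qed.

Lemma guided_over_nseq_b m w : guided qOver 0 (nseq m Lb ++ w) = guided qOver 0 w.
Proof.
by elim: m => [|m IHm] //=; rewrite guided_cons /tsrc /= cst_ord0 addr0 eqxx IHm.
Qed.

Lemma guided_c s n : s <> qC -> 0 <= n -> guided s n [:: Lc] = Some qC.
Proof.
by case: s => // _ n_ge0; rewrite guided_cons /tsrc /= cst_ord0 addr0 eqxx n_ge0.
Qed.

Lemma guided_Lex w : Lex w ->
  exists2 q, guided qA 0 w = Some q & q \in @vfinal _ _ Lex_vass.
Proof.
have qA_AB : qA = qA \/ qA = qB by left.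
case=> [[n [m [le_mn ->]]] | [n [m ->]]]; rewrite guided_nseq_a // add0r.
  rewrite -[nseq m Lb]cats0 guided_nseq_b //.
  by eexists; first reflexivity; case: (m == 0%N).
have [le_mn | lt_nm] := leqP m n.
  by rewrite guided_nseq_b ?guided_c //; [exists qC | case: (m == 0%N) | lia].
have -> : m = (n + (m - n).-1.+1)%N by lia.
rewrite nseqD -catA guided_nseq_b // subrr guided_over; last first.
  by case: (n == 0%N); [left | right].
by rewrite guided_over_nseq_b guided_c //; exists qC.
Qed.

Definition Lex_vass_inv (s : Lex_state) (v : cvec 1) (u : seq abc) : Prop :=
  match s with
  | qA => exists n : nat, u = nseq n La /\ v ord0 = n%:Z
  | qB => exists n m : nat,
      [/\ u = nseq n La ++ nseq m Lb, (m <= n)%N & v ord0 = n%:Z - m%:Z]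
  | qOver => exists n m : nat, u = nseq n La ++ nseq m Lb
  | qC => exists n m : nat, u = nseq n La ++ nseq m Lb ++ [:: Lc]
  end.

Lemma rcons_nseq (T : Type) (x : T) n : rcons (nseq n x) x = nseq n.+1 x.
Proof. by rewrite -cats1 -addn1 nseqD. Qed.

Lemma Lex_vass_inv_step t s v u :
  t \in vdelta Lex_vass -> tsrc t = s -> vnonneg (vadd v (tvec t)) ->
  Lex_vass_inv s v u -> Lex_vass_inv (tdst t) (vadd v (tvec t)) (rcons u (tlab t)).
Proof.
rewrite /= !inE => t_edge src_t /forallP /(_ ord0); rewrite !ffunE.
move: t_edge src_t; repeat case/predU1P => [-> | ]; try move/eqP => ->.
all: move=> <-; rewrite /tvec /tdst /tlab /= !ffunE => counter_ge0.
- by case=> n [-> ->]; exists n.+1; rewrite rcons_nseq; split => //; lia.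
- by case=> n [-> vn]; exists n, 1%N; rewrite -cats1; split => //; lia.
- case=> n [m [-> le_mn vnm]]; exists n, m.+1.
  by rewrite rcons_cat rcons_nseq; split => //; lia.
- by case=> n [-> _]; exists n, 1%N; rewrite -cats1.
- by case=> n [m [-> _ _]]; exists n, m.+1; rewrite rcons_cat rcons_nseq.
- by case=> n [m ->]; exists n, m.+1; rewrite rcons_cat rcons_nseq.
- by case=> n [-> _]; exists n, 0%N; rewrite -cats1.
- by case=> n [m [-> _ _]]; exists n, m; rewrite -cats1 -catA.
- by case=> n [m ->]; exists n, m; rewrite -cats1 -catA.
Qed.

Lemma Lex_vass_inv_run ts w s v u q : Lex_vass_inv s v u ->
  @run_end _ _ Lex_vass s v ts w = Some q -> exists v', Lex_vass_inv q v' (u ++ w).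
Proof.
elim: ts w s v u => [|t ts IHts] [|x w] s v u //=.
  by move=> inv_u [<-]; exists v; rewrite cats0.
case: ifP => // /and4P [t_edge /eqP src_t /eqP lab_t counter_ge0] inv_u.
have := Lex_vass_inv_step t_edge src_t counter_ge0 inv_u.
by rewrite lab_t => /IHts /[apply]; rewrite cat_rcons.
Qed.

Lemma Lex_vass_lang w : lang Lex_vass w <-> Lex w.
Proof.
split=> [[ts [q [run_q final_q]]] | /guided_Lex [q guided_q final_q]].
  have inv_nil : Lex_vass_inv qA (vzero 1) [::] by exists 0%N; rewrite ffunE.
  have [v' /=] := Lex_vass_inv_run inv_nil run_q.
  case: q final_q {run_q} => //= _.
  - by case=> n [-> _]; left; exists n, 0%N; rewrite cats0.
  - by case=> n [m [-> le_mn _]]; left; exists n, m.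
  - by case=> n [m ->]; right; exists n, m.
by exists (guess_run qA 0 w), q.
Qed.

Definition conf_after (h : seq (trans Lex_vass)) : Lex_state * int :=
  foldl (fun (c : Lex_state * int) (t : trans Lex_vass) => (tdst t, c.2 + tvec t ord0))
    (qA, 0) h.

Definition Lex_resolver (h : seq (trans Lex_vass)) (x : abc) : trans Lex_vass :=
  guess (conf_after h).1 (conf_after h).2 x.

Lemma resolve_from_Lex h w :
  resolve_from Lex_resolver h w = h ++ guess_run (conf_after h).1 (conf_after h).2 w.
Proof.
elim: w h => [|x w IHw] h /=; first by rewrite cats0.
by rewrite IHw /conf_after foldl_rcons cat_rcons.
Qed.

Lemma Lex_in_CH1 : in_CH 1 Lex.
Proof.
exists Lex_vass; split; last exact: Lex_vass_lang.
exists Lex_resolver.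
split=> [h x | w /Lex_vass_lang /guided_Lex [q guided_q final_q]].
  by split; [exact: guess_edge | exact: guess_lab].
by rewrite resolve_from_Lex; split; exists q.
Qed.

Theorem mainTheorem2 : in_CH 1 Lex /\ ~ in_CD_any Lex.
Proof.
split; first exact: Lex_in_CH1.
by case=> k [_ /Lex_notin_CD].
Qed.
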